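(* Let $\mathcal{X}$ be a feature set, $\mathcal{Y}^*$ a convex subset of a Euclidean space, $\mathcal{F}$ the set of all maps $\mathcal{X}\to\mathcal{Y}^*$, and $\mathcal{F}^T\subseteq\mathcal{F}$ an allowable function class. Let $f^*\in\mathcal{F}$ be the true function and $\widehat f^*\in\mathcal{F}$ an estimate of it. Let $\ell:\mathcal{Y}^*\times\mathcal{Y}^*\to\mathbb{R}_+$ be differentiable with gradients bounded in norm by some $K<\infty$ and convex in its second argument. Fix $n\ge1$ and suppose: (i) (approximate minimization) for every $x_{1:n}=(x_1,\dots,x_n)\in\mathcal{X}^n$ there is a returned $\widetilde f^T(\cdot;x_{1:n})\in\mathcal{F}^T$ with $n^{-1}\sum_{i=1}^n\ell(\widetilde f^T(x_i;x_{1:n}),\widehat f^*(x_i))\le\min_{f\in\mathcal{F}^T}n^{-1}\sum_{i=1}^n\ell(f(x_i),\widehat f^*(x_i))+\delta$ for some $\delta\ge0$; (ii) (approximate maximization) the returned $\widetilde x_{1:n}\in\mathcal{X}^n$ satisfies $n^{-1}\sum_{i=1}^n\ell(\widetilde f^T(\widetilde x_i;\widetilde x_{1:n}),\widehat f^*(\widetilde x_i))\ge\max_{x_{1:n}}n^{-1}\sum_{i=1}^n\ell(\widetilde f^T(x_i;x_{1:n}),\widehat f^*(x_i))-\nu$ for some $\nu\ge0$. Define $\widehat{\mathcal{E}}:=n^{-1}\sum_{i=1}^n\ell(\widetilde f^T(\widetilde x_i;\widetilde x_{1:n}),\widehat f^*(\widetilde x_i))$ and $\mathcal{E}:=\max_{x_{1:n}\in\mathcal{X}^n}\min_{f\in\mathcal{F}^T}n^{-1}\sum_{i=1}^n\ell(f(x_i),f^*(x_i))$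 (all maxima and minima assumed attained). Then $$|\widehat{\mathcal{E}}-\mathcal{E}|\le(\delta+\nu)+3K\,\|\widehat f^*-f^*\|_\infty,$$ where $\|f_1-f_2\|_\infty=\sup_{x\in\mathcal{X}}|f_1(x)-f_2(x)|$.
   Context: The quantity $\mathcal{E}$ is the population value of the falsifier's max-min program and $\widehat{\mathcal{E}}$ is the value attained by the plug-in program in which $f^*$ is replaced by the estimate $\widehat f^*$ and the inner minimization and outer maximization are carried out by approximate routines with optimality gaps $\delta$ and $\nu$. *)

From HB Require Import structures.
From mathcomp Require Import all_boot all_order all_algebra.
From mathcomp Require Import all_classical all_reals all_analysis.
Set Implicit Arguments. Unset Strict Implicit. Unset Printing Implicit Defensive.
Import Order.TTheory GRing.Theory Num.Theory.
Import numFieldNormedType.Exports.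
Local Open Scope classical_set_scope.
Local Open Scope ring_scope.

Definition eucnorm {R : realType} {d : nat} (v : 'rV[R]_d) : R :=
  Num.sqrt (\sum_(i < d) v ord0 i ^+ 2).

Definition convex_subset {R : realType} {d : nat} (Y : set 'rV[R]_d) : Prop :=
  forall a b, Y a -> Y b -> forall t : R, 0 <= t <= 1 ->
    Y (t *: a + (1 - t) *: b).

Definition joint_loss {R : realType} {d : nat} (l : 'rV[R]_d -> 'rV[R]_d -> R)
  (z : 'rV[R]_(d + d)) : R := l (lsubmx z) (rsubmx z).

Definition loss_grad {R : realType} {d : nat} (l : 'rV[R]_d -> 'rV[R]_d -> R)
  (a b : 'rV[R]_d) : 'rV[R]_(d + d) :=
  \row_(j < d + d) ('D_(delta_mx ord0 j) (joint_loss l) (row_mx a b)).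

Definition emp_risk {R : realType} {d n : nat} {X : Type}
  (l : 'rV[R]_d -> 'rV[R]_d -> R) (f g : X -> 'rV[R]_d) (xs : 'I_n -> X) : R :=
  n%:R^-1 * \sum_(i < n) l (f (xs i)) (g (xs i)).

Definition is_min {R : realType} (S : set R) (v : R) : Prop :=
  S v /\ forall w, S w -> v <= w.
Definition is_max {R : realType} (S : set R) (v : R) : Prop :=
  S v /\ forall w, S w -> w <= v.

Definition sup_dist {R : realType} {d : nat} {X : Type} (f1 f2 : X -> 'rV[R]_d) : \bar R :=
  ereal_sup [set (eucnorm (f1 x - f2 x))%:E | x in [set: X]].

From HB Require Import structures.
From mathcomp Require Import all_boot all_order all_algebra.
From mathcomp Require Import all_classical all_reals all_analysis.
From mathcomp Require Import ring lra.
Import Order.TTheory GRing.Theory Num.Theory.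
Import numFieldNormedType.Exports.
Local Open Scope classical_set_scope.
Local Open Scope ring_scope.

(* A loss that is convex in its second argument with gradient bounded by K is
   K-Lipschitz in that argument: along the segment from b to b' its directional
   derivative is at least -K|b' - b| and, by convexity, at most l a b' - l a b.
   Hence the empirical risks against f^* and its estimate differ by at most
   K ||fhat - f^*||_oo for every candidate f, so the inner minima differ by at
   most that much, and so do the outer maxima; the optimisation gaps delta and
   nu add to this.  This yields the bound even with K in place of 3K. *)

Section EuclideanNorm.
Context {R : realType} {m : nat}.
Implicit Types u v : 'rV[R]_m.

Lemma eucnorm_ge0 u : 0 <= eucnorm u.
Proof. exact: sqrtr_ge0. Qed.

Lemma eucnorm_sq u : eucnorm u ^+ 2 = \sum_(j < m) u ord0 j ^+ 2.
Proof. by rewrite /eucnorm sqr_sqrtr // sumr_ge0 // => j _; exact: sqr_ge0. Qed.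

Lemma eucnormN u : eucnorm (- u) = eucnorm u.
Proof. by rewrite /eucnorm; congr Num.sqrt; apply: eq_bigr => j _; rewrite mxE sqrrN. Qed.

Lemma eucnorm_eq0_entry u : eucnorm u = 0 -> forall j, u ord0 j = 0.
Proof.
move=> u0 j; have sq0 : \sum_(j < m) u ord0 j ^+ 2 = 0 by rewrite -eucnorm_sq u0 expr0n.
have /eqP := @psumr_eq0P _ _ predT _ (fun j _ => sqr_ge0 (u ord0 j)) sq0 j isT.
by rewrite sqrf_eq0 => /eqP.
Qed.

Lemma cauchy_schwarz_lower u v :
  - (eucnorm u * eucnorm v) <= \sum_(j < m) u ord0 j * v ord0 j.
Proof.
set A := eucnorm u; set B := eucnorm v.
have [A0|An0] := eqVneq A 0.
  by rewrite A0 mul0r oppr0 big1 // => j _; rewrite (eucnorm_eq0_entry u A0) ?mul0r.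
have [B0|Bn0] := eqVneq B 0.
  by rewrite B0 mulr0 oppr0 big1 // => j _; rewrite (eucnorm_eq0_entry v B0) ?mulr0.
have AB0 : 0 < A * B by rewrite mulr_gt0 // lt_def ?An0 ?Bn0 eucnorm_ge0.
set s := \sum_(j < m) _.
(* 0 <= sum_j (B u_j + A v_j)^2 = 2AB (AB + s) *)
have : 0 <= \sum_(j < m) (B * u ord0 j + A * v ord0 j) ^+ 2.
  by apply: sumr_ge0 => j _; exact: sqr_ge0.
have -> : \sum_(j < m) (B * u ord0 j + A * v ord0 j) ^+ 2 =
    B ^+ 2 * (\sum_(j < m) u ord0 j ^+ 2) + 2 * A * B * s
    + A ^+ 2 * (\sum_(j < m) v ord0 j ^+ 2).
  by rewrite /s !mulr_sumr -!big_split; apply: eq_bigr => j _ /=; ring.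
rewrite -!eucnorm_sq -/A -/B.
by move=> ?; nra.
Qed.

End EuclideanNorm.

Lemma eucnorm_row_mx0 {R : realType} {d : nat} (v : 'rV[R]_d) :
  eucnorm (row_mx (0 : 'rV[R]_d) v) = eucnorm v.
Proof.
rewrite /eucnorm big_split_ord /= big1 ?add0r => [|j _]; last first.
  by rewrite row_mxEl mxE expr0n.
by congr Num.sqrt; apply: eq_bigr => j _; rewrite row_mxEr.
Qed.

Lemma derive_row_coord {R : realType} {m : nat} (f : 'rV[R]_m -> R) (p w : 'rV[R]_m) :
  differentiable f p ->
  'D_w f p = \sum_(j < m) w ord0 j * 'D_(delta_mx ord0 j) f p.
Proof.
move=> df; rewrite deriveE // {1}(row_sum_delta w) linear_sum /=.
by apply: eq_bigr => j _; rewrite linearZ /= -deriveE.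
Qed.

Lemma derive_ge_neg_gradnorm {R : realType} {m : nat} {f : 'rV[R]_m -> R}
    {p : 'rV[R]_m} (w : 'rV[R]_m) {K : R} :
  differentiable f p ->
  eucnorm (\row_j 'D_(delta_mx ord0 j) f p) <= K ->
  - (K * eucnorm w) <= 'D_w f p.
Proof.
move=> df gradK; rewrite derive_row_coord //.
have := cauchy_schwarz_lower w (\row_j 'D_(delta_mx ord0 j) f p).
under eq_bigr => j _ do rewrite mxE.
by have := eucnorm_ge0 w; nra.
Qed.

Lemma convex_derive_le {R : realType} {V : normedModType R} {f : V -> R} {p w : V} :
  derivable f p w ->
  (forall t, 0 < t < 1 -> f (t *: w + p) <= t * f (w + p) + (1 - t) * f p) ->
  'D_w f p <= f (w + p) - f p.
Proof.
move=> dfw cvx.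
have quot : (fun h : R => h^-1 *: ((f \o shift p) (h *: w) - f p)) @ 0^' --> 'D_w f p.
  exact: dfw.
apply: (cvgr_to_le (cvg_dnbhs_at_right quot)); near=> h.
have h0 : 0 < h by near: h; exact: nbhs_right_gt.
have h1 : h < 1 by near: h; exact: nbhs_right_lt.
have := cvx h; rewrite h0 h1 /= => /(_ isT) fh.
rewrite [_ *: _]/(_ * _) ler_pdivrMl //; nra.
Unshelve. all: by end_near.
Qed.

Section LossLipschitz.
Context {R : realType} {d : nat} {Ystar : set 'rV[R]_d}.
Context {l : 'rV[R]_d -> 'rV[R]_d -> R} {K : R}.
Hypothesis l_diff :
  forall a b, Ystar a -> Ystar b -> differentiable (joint_loss l) (row_mx a b).
Hypothesis l_grad :
  forall a b, Ystar a -> Ystar b -> eucnorm (loss_grad l a b) <= K.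
Hypothesis l_convex : forall a b b', Ystar a -> Ystar b -> Ystar b' ->
  forall t : R, 0 <= t <= 1 ->
  l a (t *: b + (1 - t) *: b') <= t * l a b + (1 - t) * l a b'.

Lemma loss_sub_le {a b b'} : Ystar a -> Ystar b -> Ystar b' ->
  l a b - l a b' <= K * eucnorm (b' - b).
Proof.
move=> Ya Yb Yb'; set w := row_mx (0 : 'rV[R]_d) (b' - b).
have segment t : joint_loss l (t *: w + row_mx a b) = l a (t *: b' + (1 - t) *: b).
  rewrite /joint_loss /w scale_row_mx add_row_mx row_mxKl row_mxKr scaler0 add0r.
  by congr (l a _); rewrite scalerBr scalerBl scale1r addrA addrAC.
have ab : joint_loss l (row_mx a b) = l a b by rewrite /joint_loss row_mxKl row_mxKr.
have lower := derive_ge_neg_gradnorm w (l_diff _ _ Ya Yb) (l_grad _ _ Ya Yb).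
have upper : 'D_w (joint_loss l) (row_mx a b) <= l a b' - l a b.
  have := convex_derive_le (@diff_derivable _ _ _ _ _ w (l_diff _ _ Ya Yb)).
  have end_b' : joint_loss l (w + row_mx a b) = l a b'.
    by rewrite -[w]scale1r segment scale1r subrr scale0r addr0.
  rewrite end_b' ab; apply => t /andP[t0 t1].
  by rewrite segment; apply: l_convex; rewrite ?ltW.
by rewrite eucnorm_row_mx0 in lower; lra.
Qed.

Lemma loss_lipschitz {a b b'} : Ystar a -> Ystar b -> Ystar b' ->
  `| l a b - l a b' | <= K * eucnorm (b - b').
Proof.
move=> Ya Yb Yb'; have := loss_sub_le Ya Yb Yb'; rewrite -[b' - b]opprB eucnormN.
by have := loss_sub_le Ya Yb' Yb; rewrite ler_norml; lra.
Qed.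

End LossLipschitz.

Lemma emp_risk_dist_le {R : realType} {d n : nat} {X : Type}
    {l : 'rV[R]_d -> 'rV[R]_d -> R} {f g1 g2 : X -> 'rV[R]_d} {xs : 'I_n -> X} {C : R} :
  (1 <= n)%N ->
  (forall i, `| l (f (xs i)) (g1 (xs i)) - l (f (xs i)) (g2 (xs i)) | <= C) ->
  `| emp_risk l f g1 xs - emp_risk l f g2 xs | <= C.
Proof.
move=> n1 lC; have n0 : 0 < n%:R :> R by rewrite ltr0n.
rewrite /emp_risk -mulrBr -sumrB normrM ger0_norm ?invr_ge0 ?(ltW n0) // ler_pdivrMl //.
apply: le_trans (ler_norm_sum _ _ _) _.
apply: le_trans (ler_sum _ (fun i _ => lC i)) _.
by rewrite sumr_const card_ord mulr_natl.
Qed.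

Section OptimalValues.
Context {R : realType} {T : Type}.

Lemma is_min_dist_le (S : set T) (g h : T -> R) (m1 m2 C : R) :
  (forall s, S s -> `| g s - h s | <= C) ->
  is_min (g @` S) m1 -> is_min (h @` S) m2 -> `| m1 - m2 | <= C.
Proof.
move=> ghC [[s1 S1 <-] min1] [[s2 S2 <-] min2].
have := min1 _ (imageP g S2); have := min2 _ (imageP h S1).
have := ghC _ S1; have := ghC _ S2; rewrite !ler_norml; do 2 move=> /andP[? ?].
by move=> ? ?; apply/andP; split; lra.
Qed.

Lemma is_max_sandwich (g h : T -> R) (M E a b : R) :
  (forall s, h s - a <= g s <= h s + b) ->
  is_max (range g) M -> is_max (range h) E -> E - a <= M <= E + b.
Proof.
move=> ghab [[s1 _ <-] max1] [[s0 _ <-] max0].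
have := max1 _ (imageT g s0); have := max0 _ (imageT h s1).
have /andP[? ?] := ghab s0; have /andP[? ?] := ghab s1.
by move=> ? ?; apply/andP; split; lra.
Qed.

End OptimalValues.

Lemma le_ereal_sup_scale (R : realType) (X : Type) (N : X -> R) (c a e : R) (x0 : X) :
  0 <= c -> (forall C, (forall x, c * N x <= C) -> e <= a + C) ->
  (e%:E <= a%:E + c%:E * ereal_sup [set (N x)%:E | x in [set: X]])%E.
Proof.
move=> c0 bound.
have ub x : ((N x)%:E <= ereal_sup [set (N x)%:E | x in [set: X]])%E.
  by apply: ereal_sup_ubound; exists x.
case: (ereal_sup _) ub => [r| |] ub.
- rewrite -EFinM -EFinD lee_fin; apply: bound => x.
  by apply: ler_wpM2l => //; rewrite -lee_fin.
- have [c_eq0|cn0] := eqVneq c 0.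
    by rewrite c_eq0 mul0e adde0 lee_fin -[a]addr0; apply: bound => x; rewrite c_eq0 mul0r.
  by rewrite mulry gtr0_sg ?lt_def ?cn0 // mul1e addey // leey.
- by have := ub x0; rewrite leeNy_eq.
Qed.

Theorem proposition1 (R : realType) (d : nat) (X : Type)
  (Ystar : set 'rV[R]_d) (FT : set (X -> 'rV[R]_d))
  (fstar fhat : X -> 'rV[R]_d)
  (l : 'rV[R]_d -> 'rV[R]_d -> R) (K : R) (n : nat)
  (delta nu : R)
  (ftilde : ('I_n -> X) -> (X -> 'rV[R]_d)) (xtilde : 'I_n -> X)
  (mhat : ('I_n -> X) -> R) (M : R)
  (mstar : ('I_n -> X) -> R) (E : R) :
  convex_subset Ystar ->
  (forall f, FT f -> forall x, Ystar (f x)) ->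
  (forall x, Ystar (fstar x)) ->
  (forall x, Ystar (fhat x)) ->
  (forall a b, Ystar a -> Ystar b -> 0 <= l a b) ->
  (forall a b, Ystar a -> Ystar b -> differentiable (joint_loss l) (row_mx a b)) ->
  (forall a b, Ystar a -> Ystar b -> eucnorm (loss_grad l a b) <= K) ->
  (forall a b b', Ystar a -> Ystar b -> Ystar b' -> forall t : R, 0 <= t <= 1 ->
     l a (t *: b + (1 - t) *: b') <= t * l a b + (1 - t) * l a b') ->
  (1 <= n)%N ->
  0 <= delta ->
  (forall xs, is_min [set emp_risk l f fhat xs | f in FT] (mhat xs)) ->
  (forall xs, FT (ftilde xs)) ->
  (forall xs, emp_risk l (ftilde xs) fhat xs <= mhat xs + delta) ->
  0 <= nu ->
  is_max [set emp_risk l (ftilde xs) fhat xs | xs in [set: 'I_n -> X]] M ->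
  M - nu <= emp_risk l (ftilde xtilde) fhat xtilde ->
  (forall xs, is_min [set emp_risk l f fstar xs | f in FT] (mstar xs)) ->
  is_max (range mstar) E ->
  ((`| emp_risk l (ftilde xtilde) fhat xtilde - E |)%:E
     <= (delta + nu)%:E + (3 * K)%:E * sup_dist fhat fstar)%E.
Proof.
move=> _ FT_Y fstar_Y fhat_Y _ l_diff l_grad l_convex n1 delta0 mhat_min ftilde_FT
  ftilde_approx nu0 M_max xtilde_approx mstar_min E_max.
pose x0 := xtilde (Ordinal n1).
have K0 : 0 <= K := le_trans (eucnorm_ge0 _) (l_grad _ _ (fstar_Y x0) (fstar_Y x0)).
apply: (@le_ereal_sup_scale _ _ (fun x => eucnorm (fhat x - fstar x)) _ _ _ x0).
  by rewrite mulr_ge0.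
move=> C bound; have KC x : K * eucnorm (fhat x - fstar x) <= C.
  by apply: le_trans (bound x); have := eucnorm_ge0 (fhat x - fstar x); nra.
have risk_dist f (xs : 'I_n -> X) :
    FT f -> `| emp_risk l f fhat xs - emp_risk l f fstar xs | <= C.
  move=> FTf; apply: (emp_risk_dist_le n1) => i; apply: le_trans (KC _).
  exact: (loss_lipschitz l_diff l_grad l_convex (FT_Y f FTf _) (fhat_Y _) (fstar_Y _)).
have mhat_mstar xs : `| mhat xs - mstar xs | <= C.
  exact: is_min_dist_le (risk_dist ^~ xs) (mhat_min xs) (mstar_min xs).
have /andP[ME1 ME2] : E - C <= M <= E + (C + delta).
  apply: is_max_sandwich M_max E_max => xs.
  have := (mhat_min xs).2 _ (imageP _ (ftilde_FT xs)); have := ftilde_approx xs.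
  by have := mhat_mstar xs; rewrite ler_norml => /andP[? ?] ? ?; apply/andP; split; lra.
have := M_max.2 _ (imageT _ xtilde).
by rewrite ler_norml => ?; apply/andP; split; lra.
Qed.
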